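(* In the setting below, for every risk model $c$ on the sample, $$1\;\ge\;\mathrm{AUROC}\;\ge\;\max\Big\{\min_{1\le k\le M}B_k(\mathrm{AUNBC};a_0),\,0\Big\},$$ where for $k=1,\dots,M$ the function $B_k(\cdot;a_0)$, defined for $y\in[a_0p_1-(1-a_0)P_M,\;a_0]$, is $$B_k(y;a_0)=\begin{cases}1-\frac{a_0-y-(1-a_0)P_k}{a_0(1-p_k)}, & \text{if } y\le a_0-2(1-a_0)P_k,\\[2pt] 1-\frac{(a_0-y)^2}{4P_k(1-p_k)a_0(1-a_0)}, & \text{otherwise}.\end{cases}$$
   Context: Let $0=p_0<p_1<\cdots<p_M<p_{M+1}=1$ with $M\ge1$, and let a labelled sample $\{(\bm x_j,y_j)\}_{j=1}^N$, $y_j\in\{0,1\}$, contain $N^+\ge1$ positive and $N^-\ge1$ negative samples; $a_0=N^+/N$. For $k=1,\dots,M$, $P_k=\sum_{i=1}^k\frac{(p_{i+1}-p_i)p_i}{1-p_i}$. A risk model is any function $c$ assigning to each sample a value $c(\bm x_j)\in[0,1]$. For $i=0,\dots,M$, $\mathrm{TP}_i=\#\{j:c(\bm x_j)\ge p_i,\ y_j=1\}$, $\mathrm{FP}_i=\#\{j:c(\bm x_j)\ge p_i,\ y_j=0\}$, and $\mathrm{TP}_{M+1}=\mathrm{FP}_{M+1}=0$. $\mathrm{AUROC}=\frac{1}{N^+N^-}\sum_{i=0}^M(\mathrm{FP}_i-\mathrm{FP}_{i+1})\mathrm{TP}_i$ and $\mathrm{AUNBC}=\frac1N\sum_{i=0}^M(p_{i+1}-p_i)\big(\mathrm{TP}_i-\mathrm{FP}_i\frac{p_i}{1-p_i}\big)$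 (one has $a_0p_1-(1-a_0)P_M\le\mathrm{AUNBC}\le a_0$). *)

From HB Require Import structures.
From mathcomp Require Import all_boot all_order all_algebra.
Set Implicit Arguments. Unset Strict Implicit. Unset Printing Implicit Defensive.
Import Order.TTheory GRing.Theory Num.Theory.
Local Open Scope ring_scope.

Section Defs.
Variable R : realFieldType.
Variables (N : nat) (X : Type).
Variables (x : 'I_N -> X) (lab : 'I_N -> bool) (c : X -> R).
Variables (M : nat) (p : nat -> R).

Definition Npos : nat := #|[set j : 'I_N | lab j]|.
Definition Nneg : nat := #|[set j : 'I_N | ~~ lab j]|.

Definition a0 : R := (Npos)%:R / N%:R.

Definition TP (i : nat) : nat :=
  if (i <= M)%N then #|[set j : 'I_N | (p i <= c (x j)) && lab j]| else 0%N.
Definition FP (i : nat) : nat :=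
  if (i <= M)%N then #|[set j : 'I_N | (p i <= c (x j)) && ~~ lab j]| else 0%N.

Definition AUROC : R :=
  (Npos%:R * Nneg%:R)^-1 *
  \sum_(0 <= i < M.+1) ((FP i)%:R - (FP i.+1)%:R) * (TP i)%:R.

Definition AUNBC : R :=
  N%:R^-1 *
  \sum_(0 <= i < M.+1)
     (p i.+1 - p i) * ((TP i)%:R - (FP i)%:R * (p i / (1 - p i))).

Definition Pk (k : nat) : R :=
  \sum_(1 <= i < k.+1) (p i.+1 - p i) * p i / (1 - p i).

Definition Bk (k : nat) (y a : R) : R :=
  if y <= a - 2 * (1 - a) * Pk k
  then 1 - (a - y - (1 - a) * Pk k) / (a * (1 - p k))
  else 1 - (a - y) ^+ 2 / (4 * Pk k * (1 - p k) * a * (1 - a)).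

(* min_{1 <= k <= M} B_k(y; a)  (big min seeded with B_1, min is idempotent) *)
Definition minB (y a : R) : R :=
  \big[Num.min/Bk 1 y a]_(1 <= k < M.+1) Bk k y a.

End Defs.
Arguments a0 {R N} lab.

From HB Require Import structures.
From mathcomp Require Import all_boot all_order all_algebra.
From mathcomp Require Import ring lra.
Import Order.TTheory GRing.Theory Num.Theory.
Local Open Scope ring_scope.

(* Write t_i = TP_i, f_i = FP_i and N = N^+ + N^-.  Then N^+ N^- (1 - AUROC) is
   L = sum_{i>=1} (f_i - f_{i+1}) (N^+ - t_i)  [fp_loss], while N (a_0 - AUNBC) = S + Q
   with S = sum_{i>=1} (p_{i+1} - p_i) (N^+ - t_i)  [tp_shortfall] and
   Q = sum_{i>=1} (p_{i+1} - p_i) p_i/(1 - p_i) f_i  [fp_cost]; as f is nonincreasing,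
   Q >= P_m f_m.  If f_m <= lam (1 - p_m) for every m, summation by parts against the
   nondecreasing weights N^+ - t_i gives L <= lam S.  With c_m = min(N^-, Q/P_m) >= f_m
   and lam = c_k/(1 - p_k) the largest of these ratios, this yields
   (1 - p_k) L <= c_k S <= c_k (N (a_0 - AUNBC) - P_k c_k)  with  0 <= c_k <= N^-.
   Maximising the concave quadratic c |-> c (N (a_0 - y) - P_k c) over [0, N^-] bounds
   L / (N^+ N^-) by 1 - B_k(AUNBC; a_0); the vertex lies beyond N^- exactly in the
   first case of B_k. *)

Section NatIndexedSums.
Context {R : numDomainType}.

Lemma sumr_nat_ge0 (F : nat -> R) m n :
  (forall i, (m <= i < n)%N -> 0 <= F i) -> 0 <= \sum_(m <= i < n) F i.
Proof. by move=> F_ge0; rewrite big_nat_cond sumr_ge0 // => i /andP[/F_ge0]. Qed.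

Lemma telescope_sumr_rev (f : nat -> R) m n : (m <= n)%N ->
  \sum_(m <= j < n) (f j - f j.+1) = f m - f n.
Proof.
move=> le_mn; rewrite -[LHS]opprK -sumrN.
under eq_bigr do rewrite opprB.
by rewrite telescope_sumr // opprB.
Qed.

Lemma nondecn_le (f : nat -> R) n :
  (forall i, (i < n)%N -> f i <= f i.+1) ->
  forall i j, (i <= j <= n)%N -> f i <= f j.
Proof.
move=> f_step i j /andP[le_ij le_jn].
apply: (@Order.NatMonotonyTheory.nondecn_inP _ _ [pred k | k <= n]%N) => //=.
- by move=> a b /= ? ? k /andP[_ /ltnW/leq_trans]; apply.
- by move=> k _ /= lt_kn; apply: f_step.
- exact: leq_trans le_jn.
Qed.

Lemma nonincn_le (f : nat -> R) n :
  (forall i, (i < n)%N -> f i.+1 <= f i) ->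
  forall i j, (i <= j <= n)%N -> f j <= f i.
Proof.
move=> f_step i j ij; rewrite -lerN2.
by apply: (@nondecn_le (fun k => - f k) n) ij => k /f_step; rewrite lerN2.
Qed.

Lemma abel_sum_ge (a h : nat -> R) m n :
  (forall i, (m <= i)%N -> (i.+1 < n)%N -> a i <= a i.+1) ->
  (forall k, (m <= k < n)%N -> 0 <= \sum_(k <= j < n) h j) ->
  a m * \sum_(m <= j < n) h j <= \sum_(m <= j < n) h j * a j.
Proof.
move: (leqnn (n - m)); move: {2}(n - m)%N => d.
elim: d m => [|d IH] m le_nm a_nondec tail_ge0.
  have le_nm' : (n <= m)%N by rewrite -subn_eq0 -leqn0.
  by rewrite !big_geq ?mulr0.
have [lt_mn|le_nm'] := ltnP m n; last by rewrite !big_geq ?mulr0.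
rewrite 2!(big_ltn lt_mn) mulrDr [h m * a m]mulrC lerD2l.
have [lt_m1n|le_nm1] := ltnP m.+1 n; last by rewrite !big_geq ?mulr0.
have tail1 : 0 <= \sum_(m.+1 <= j < n) h j by apply: tail_ge0; rewrite lt_m1n andbT.
apply: le_trans (ler_wpM2r tail1 (a_nondec m (leqnn m) lt_m1n)) _.
apply: IH => [|i le_m1i|k /andP[le_m1k lt_kn]].
- by rewrite subnS -ltnS prednK ?subn_gt0.
- by apply: a_nondec; apply: ltnW.
- by apply: tail_ge0; rewrite lt_kn andbT ltnW.
Qed.
End NatIndexedSums.

Lemma Bk_le (R : realFieldType) (p : nat -> R) k (Np Nn y c L : R) :
  0 < Np -> 0 < Nn -> p k < 1 -> 0 < Pk p k -> 0 <= c <= Nn ->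
  L * (1 - p k) <= c * (Np - (Np + Nn) * y - Pk p k * c) ->
  Bk p k y (Np / (Np + Nn)) <= 1 - L / (Np * Nn).
Proof.
move=> Np_gt0 Nn_gt0; rewrite -subr_gt0 => A_gt0 P_gt0 /andP[c_ge0 c_le] L_le.
rewrite /Bk; set A := 1 - p k in A_gt0 L_le *; set P := Pk p k in P_gt0 L_le *.
set N := Np + Nn in L_le *; set D := Np / N - y.
have N_gt0 : 0 < N by rewrite addr_gt0.
have NpNn_gt0 : 0 < Np * Nn by rewrite mulr_gt0.
have ND : N * D = Np - N * y by rewrite /D mulrBr mulrC divfK ?lt0r_neq0.
rewrite -ND in L_le.
have -> : 1 - Np / N = Nn / N by rewrite /N; field; lra.
case: ifP => D_ge; rewrite lerD2l lerN2.
- have ND_ge : 2 * Nn * P <= N * D.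
    have -> : 2 * Nn * P = N * (2 * (Nn / N) * P) by field; lra.
    by rewrite ler_pM2l // /D; lra.
  rewrite [X in _ <= X](_ : _ = Nn * (N * D - Nn * P) / A / (Np * Nn)); last first.
    by rewrite /D /N; field; lra.
  rewrite ler_pM2r ?invr_gt0 // ler_pdivlMr //.
  have : 0 <= (Nn - c) * (N * D - P * (Nn + c)) by apply: mulr_ge0; nra.
  nra.
- rewrite [X in _ <= X](_ : _ = (N * D) ^+ 2 / (4 * P * A) / (Np * Nn)); last first.
    by rewrite /D /N; field; lra.
  rewrite ler_pM2r ?invr_gt0 // ler_pdivlMr; last by nra.
  have : 0 <= (N * D - 2 * P * c) ^+ 2 by exact: sqr_ge0.
  nra.
Qed.

Section ThresholdGrid.
Variables (R : realFieldType) (M : nat) (p : nat -> R).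
Hypotheses (p0 : p 0%N = 0) (pM : p M.+1 = 1).
Hypothesis p_incr : forall i, (i <= M)%N -> p i < p i.+1.

Lemma p_le i j : (i <= j <= M.+1)%N -> p i <= p j.
Proof. by apply: nondecn_le => k; rewrite ltnS => /p_incr/ltW. Qed.

Lemma p_ge0 i : (i <= M.+1)%N -> 0 <= p i.
Proof. by move=> le_iM; rewrite -p0 p_le. Qed.

Lemma p_lt1 i : (i <= M)%N -> p i < 1.
Proof.
move=> le_iM; rewrite -pM (le_lt_trans _ (p_incr _ (leqnn M))) //.
by apply: p_le; rewrite le_iM leqnSn.
Qed.

Lemma odds_ge0 i : (i <= M)%N -> 0 <= p i / (1 - p i).
Proof.
by move=> le_iM; rewrite divr_ge0 ?p_ge0 ?(leqW le_iM) // subr_ge0 ltW ?p_lt1.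
Qed.

Lemma Pk_gt0 m : (1 <= m <= M)%N -> 0 < Pk p m.
Proof.
case/andP=> m_gt0 le_mM; have M_gt0 := leq_trans m_gt0 le_mM.
rewrite /Pk big_ltn ?ltnS // ltr_wpDr //.
  apply: sumr_nat_ge0 => i /andP[_]; rewrite ltnS => le_im.
  by rewrite -mulrA mulr_ge0 ?odds_ge0 ?subr_ge0 ?ltW ?p_incr //; apply: leq_trans le_mM.
by rewrite -mulrA mulr_gt0 ?subr_gt0 ?p_incr // divr_gt0 ?subr_gt0 ?p_lt1 // -p0 p_incr.
Qed.

Section RocCurve.
Variables (t f : nat -> R) (Np Nn : R).
Hypotheses (Np_gt0 : 0 < Np) (Nn_gt0 : 0 < Nn).
Hypotheses (t0 : t 0%N = Np) (f0 : f 0%N = Nn) (fM : f M.+1 = 0).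
Hypothesis t_noninc : forall i, (i < M)%N -> t i.+1 <= t i.
Hypothesis f_noninc : forall i, (i <= M)%N -> f i.+1 <= f i.
Hypotheses (t_bound : forall i, 0 <= t i <= Np) (f_ge0 : forall i, 0 <= f i).

Definition roc_sum := \sum_(0 <= i < M.+1) (f i - f i.+1) * t i.

Definition nbc_sum :=
  \sum_(0 <= i < M.+1) (p i.+1 - p i) * (t i - f i * (p i / (1 - p i))).

Definition fp_loss := \sum_(1 <= i < M.+1) (f i - f i.+1) * (Np - t i).

Definition tp_shortfall := \sum_(1 <= i < M.+1) (p i.+1 - p i) * (Np - t i).

Definition fp_cost := \sum_(1 <= i < M.+1) (p i.+1 - p i) * (p i / (1 - p i)) * f i.

Lemma roc_sumE : roc_sum = Np * Nn - fp_loss.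
Proof.
have sum_df : \sum_(0 <= i < M.+1) (f i - f i.+1) = Nn.
  by rewrite telescope_sumr_rev // f0 fM subr0.
have -> : fp_loss = \sum_(0 <= i < M.+1) (f i - f i.+1) * (Np - t i).
  by rewrite big_ltn // t0 subrr mulr0 add0r.
rewrite -{1}sum_df mulr_sumr -sumrB; apply: eq_bigr => i _; ring.
Qed.

Lemma nbc_sumE : Np - nbc_sum = tp_shortfall + fp_cost.
Proof.
have sum_dp : \sum_(0 <= i < M.+1) (p i.+1 - p i) = 1.
  by rewrite telescope_sumr // p0 pM subr0.
have -> : tp_shortfall + fp_cost = \sum_(0 <= i < M.+1)
    ((p i.+1 - p i) * (Np - t i) + (p i.+1 - p i) * (p i / (1 - p i)) * f i).
  by rewrite big_ltn // t0 p0 subrr !(mul0r, mulr0, add0r) big_split.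
rewrite /nbc_sum -{1}[Np]mulr1 -sum_dp mulr_sumr -sumrB; apply: eq_bigr => i _; ring.
Qed.

Lemma f_le_Nn i : (i <= M.+1)%N -> f i <= Nn.
Proof. by move=> le_iM; rewrite -f0 (@nonincn_le _ f M.+1) // => k; rewrite ltnS. Qed.

Lemma roc_sum_ge0 : 0 <= roc_sum.
Proof.
apply: sumr_nat_ge0 => i /andP[_]; rewrite ltnS => le_iM.
by rewrite mulr_ge0 ?subr_ge0 ?f_noninc //; case/andP: (t_bound i).
Qed.

Lemma fp_loss_ge0 : 0 <= fp_loss.
Proof.
apply: sumr_nat_ge0 => i /andP[_]; rewrite ltnS => le_iM.
by rewrite mulr_ge0 ?subr_ge0 ?f_noninc //; case/andP: (t_bound i).
Qed.

Lemma Pk_mul_le_fp_cost m : (1 <= m <= M)%N -> Pk p m * f m <= fp_cost.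
Proof.
case/andP=> m_gt0 le_mM.
rewrite /fp_cost (big_cat_nat _ (n := m.+1)) //= ?ltnS //.
rewrite /Pk mulr_suml -[X in X <= _]addr0 lerD //.
  apply: ler_sum_nat => i /andP[i_gt0]; rewrite ltnS => le_im.
  have le_iM := leq_trans le_im le_mM.
  rewrite -[_ * p i / _]mulrA; apply: ler_wpM2l.
    by rewrite mulr_ge0 ?odds_ge0 // subr_ge0 ltW ?p_incr.
  apply: (@nonincn_le _ f M.+1) => [k|]; first by rewrite ltnS; exact: f_noninc.
  by rewrite le_im (leqW le_mM).
apply: sumr_nat_ge0 => i /andP[_]; rewrite ltnS => le_iM.
by rewrite mulr_ge0 ?f_ge0 // mulr_ge0 ?odds_ge0 // subr_ge0 ltW ?p_incr.
Qed.

Lemma fp_loss_le lam :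
  (forall m, (1 <= m <= M)%N -> f m <= lam * (1 - p m)) ->
  fp_loss <= lam * tp_shortfall.
Proof.
move=> f_le.
pose h j := lam * (p j.+1 - p j) - (f j - f j.+1).
have tail_ge0 k : (1 <= k < M.+1)%N -> 0 <= \sum_(k <= j < M.+1) h j.
  case/andP=> k_gt0; rewrite ltnS => le_kM.
  rewrite sumrB -mulr_sumr telescope_sumr ?telescope_sumr_rev ?leqW //.
  by rewrite pM fM subr0 subr_ge0 f_le ?k_gt0.
have weights_nondec i : (1 <= i)%N -> (i.+1 < M.+1)%N -> Np - t i <= Np - t i.+1.
  by move=> _; rewrite ltnS => /t_noninc; rewrite lerD2l lerN2.
have := @abel_sum_ge _ _ h _ _ weights_nondec tail_ge0.
have -> : \sum_(1 <= j < M.+1) h j * (Np - t j) = lam * tp_shortfall - fp_loss.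
  by rewrite mulr_sumr -sumrB; apply: eq_bigr => i _; rewrite /h; ring.
have : 0 <= (Np - t 1%N) * \sum_(1 <= j < M.+1) h j.
  apply: mulr_ge0; first by rewrite subr_ge0; case/andP: (t_bound 1).
  have [M_gt0|] := ltnP 0 M; first by rewrite tail_ge0 ?ltnS.
  by rewrite leqn0 => /eqP M0; rewrite M0 big_geq.
lra.
Qed.

Lemma exists_Bk_le : (1 <= M)%N ->
  exists2 k, (1 <= k <= M)%N &
    Bk p k ((Np + Nn)^-1 * nbc_sum) (Np / (Np + Nn)) <= 1 - fp_loss / (Np * Nn).
Proof.
move=> M_gt0.
pose c m := Num.min Nn (fp_cost / Pk p m).
pose g m := c m / (1 - p m).
have c_ge_f m : (1 <= m <= M)%N -> f m <= c m.
  move=> m_range; have /andP[_ le_mM] := m_range.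
  rewrite le_min f_le_Nn ?leqW //= ler_pdivlMr ?Pk_gt0 //.
  by rewrite mulrC Pk_mul_le_fp_cost.
have cE m : (m <= M)%N -> c m = g m * (1 - p m).
  by move=> le_mM; rewrite divfK // lt0r_neq0 // subr_gt0 p_lt1.
have inord1_gt0 : (0 < @inord M 1)%N by rewrite inordK.
have [k /= k_gt0 k_max] :=
  @arg_maxP _ _ 'I_M.+1 _ (fun i => 0 < i)%N (fun i => g i) inord1_gt0.
have k_range : (1 <= k <= M)%N by rewrite k_gt0 -ltnS ltn_ord.
have g_le m : (1 <= m <= M)%N -> g m <= g k.
  case/andP=> m_gt0 le_mM; have lt_mM1 : (m < M.+1)%N by rewrite ltnS.
  exact: (k_max (Ordinal lt_mM1)).
have loss_le : fp_loss <= g k * tp_shortfall.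
  apply: fp_loss_le => m m_range; have /andP[_ le_mM] := m_range.
  apply: le_trans (c_ge_f m m_range) _; rewrite cE // ler_wpM2r ?g_le //.
  by rewrite subr_ge0 ltW ?p_lt1.
have /andP[_ le_kM] := k_range.
have c_ge0 : 0 <= c k by apply: le_trans (c_ge_f k k_range).
have Pc_le : Pk p k * c k <= fp_cost.
  by rewrite mulrC -ler_pdivlMr ?Pk_gt0 // ge_min lexx orbT.
exists k => //; apply: (@Bk_le _ p k Np Nn _ (c k) fp_loss) => //.
- exact: p_lt1.
- exact: Pk_gt0.
- by rewrite c_ge0 ge_min lexx.
rewrite mulrA mulfV ?lt0r_neq0 ?addr_gt0 // mul1r nbc_sumE.
apply: le_trans (_ : _ <= c k * tp_shortfall) _.
  by rewrite cE // mulrAC ler_wpM2r // subr_ge0 ltW ?p_lt1.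
by rewrite ler_wpM2l //; lra.
Qed.

Lemma roc_ratio_bounds : (1 <= M)%N ->
  (Np * Nn)^-1 * roc_sum <= 1 /\
  Num.max (minB M p ((Np + Nn)^-1 * nbc_sum) (Np / (Np + Nn))) 0 <=
    (Np * Nn)^-1 * roc_sum.
Proof.
move=> M_gt0; have NpNn_gt0 : 0 < Np * Nn by rewrite mulr_gt0.
have roc_ratioE : (Np * Nn)^-1 * roc_sum = 1 - fp_loss / (Np * Nn).
  by rewrite roc_sumE mulrBr mulVf ?lt0r_neq0 // mulrC.
split; first by rewrite roc_ratioE gerBl divr_ge0 ?fp_loss_ge0 ?ltW.
have roc_ratio_ge0 : 0 <= (Np * Nn)^-1 * roc_sum.
  by apply: mulr_ge0; [rewrite invr_ge0 ltW | exact: roc_sum_ge0].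
rewrite ge_max roc_ratio_ge0 andbT roc_ratioE.
have [k k_range Bk_le_k] := exists_Bk_le M_gt0.
rewrite /minB (@bigmin_inf_seq _ _ _ _ _ k _ _ _ _ _ Bk_le_k) //.
by rewrite mem_index_iota ltnS.
Qed.

End RocCurve.
End ThresholdGrid.

Section Sample.
Variables (R : realFieldType) (N : nat) (X : Type).
Variables (x : 'I_N -> X) (lab : 'I_N -> bool) (c : X -> R) (M : nat) (p : nat -> R).

Lemma Npos_add_Nneg : (Npos lab + Nneg lab)%N = N.
Proof.
rewrite /Npos /Nneg.
have -> : [set j | ~~ lab j] = ~: [set j | lab j] by apply/setP => j; rewrite !inE.
by rewrite cardsC card_ord.
Qed.

Lemma card_above_le (P : pred 'I_N) (s s' : R) : s <= s' ->
  (#|[set j | (s' <= c (x j))%R && P j]| <= #|[set j | (s <= c (x j))%R && P j]|)%N.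
Proof.
move=> le_ss'; apply/subset_leq_card/subsetP => j; rewrite !inE.
by case/andP=> le_s'c ->; rewrite (le_trans le_ss' le_s'c).
Qed.

Lemma TP_le_Npos i : (TP x lab c M p i <= Npos lab)%N.
Proof.
rewrite /TP; case: ifP => // _.
by apply/subset_leq_card/subsetP => j; rewrite !inE => /andP[].
Qed.

Section SortedThresholds.
Hypothesis p0_le : forall j, p 0%N <= c (x j).
Hypothesis p_nondec : forall i, (i < M)%N -> p i <= p i.+1.

Lemma TP0 : TP x lab c M p 0 = Npos lab.
Proof. by rewrite /TP /Npos leq0n; apply: eq_card => j; rewrite !inE p0_le. Qed.

Lemma FP0 : FP x lab c M p 0 = Nneg lab.
Proof. by rewrite /FP /Nneg leq0n; apply: eq_card => j; rewrite !inE p0_le. Qed.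

Lemma TP_noninc i : (i < M)%N -> (TP x lab c M p i.+1 <= TP x lab c M p i)%N.
Proof.
move=> lt_iM; rewrite /TP lt_iM (ltnW lt_iM).
by apply: card_above_le; apply: p_nondec.
Qed.

Lemma FP_noninc i : (i <= M)%N -> (FP x lab c M p i.+1 <= FP x lab c M p i)%N.
Proof.
move=> le_iM; rewrite /FP le_iM; case: ifP => // lt_iM.
by apply: card_above_le; apply: p_nondec.
Qed.

End SortedThresholds.
End Sample.

Theorem corollary1 (R : realFieldType) (M : nat) (p : nat -> R)
  (N : nat) (X : Type) (x : 'I_N -> X) (lab : 'I_N -> bool) (c : X -> R) :
  (1 <= M)%N ->
  p 0%N = 0 -> p M.+1 = 1 ->
  (forall i : nat, (i <= M)%N -> p i < p i.+1) ->
  (1 <= Npos lab)%N -> (1 <= Nneg lab)%N ->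
  (forall j : 'I_N, 0 <= c (x j) <= 1) ->
  1 >= AUROC x lab c M p /\
  AUROC x lab c M p >=
    Num.max (minB M p (AUNBC x lab c M p) (a0 lab)) 0.
Proof.
move=> M_gt0 p0 pM p_incr Npos_gt0 Nneg_gt0 c01.
have p_nondec i : (i < M)%N -> p i <= p i.+1 by move/ltnW/p_incr/ltW.
have p0_le j : p 0%N <= c (x j) by rewrite p0; case/andP: (c01 j).
have N_eq : N%:R = (Npos lab)%:R + (Nneg lab)%:R :> R by rewrite -natrD Npos_add_Nneg.
rewrite /AUROC /AUNBC /a0 N_eq.
apply: (@roc_ratio_bounds R M p p0 pM p_incr (fun i => (TP x lab c M p i)%:R)
  (fun i => (FP x lab c M p i)%:R)) => //.
- by rewrite ltr0n.
- by rewrite ltr0n.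
- by rewrite TP0.
- by rewrite FP0.
- by rewrite /FP ltnn.
- by move=> i lt_iM; rewrite ler_nat TP_noninc.
- by move=> i le_iM; rewrite ler_nat FP_noninc.
- by move=> i; rewrite ler0n ler_nat TP_le_Npos.
Qed.
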